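(* Let $\varphi=(\mathfrak{m}_1,\dots,\mathfrak{m}_\ell)$ be normalizer-adapted. For every $1\le p\le\ell_0$ and $1\le i\le\ell$ we have $d_i=d_{\phi_p(i)}$ and $b_i=b_{\phi_p(i)}$.
   Context: $M=\mathsf{G}/\mathsf{H}$ almost-effective, $\mathsf{G},\mathsf{H}$ compact connected; $Q$ an $\mathrm{Ad}(\mathsf{G})$-invariant inner product on $\mathfrak{g}$, $\mathfrak{m}=\mathfrak{h}^{\perp_Q}$, $\mathfrak{m}_0=\{X\in\mathfrak{m}:[\mathfrak{h},X]=0\}$. $\varphi$ is an ordered $Q$-orthogonal decomposition of $\mathfrak{m}$ into irreducible $\mathrm{Ad}(\mathsf{H})$-modules with $\mathfrak{m}_0=\mathfrak{m}_1+\dots+\mathfrak{m}_{\ell_0}$, $\dim\mathfrak{m}_p=1$ for $p\le\ell_0$, $V_p\in\mathfrak{m}_p$ $Q$-unit. $d_i=\dim\mathfrak{m}_i$; $b_i\ge0$ is defined by $-\mathcal{B}_{\mathfrak{g}}|_{\mathfrak{m}_i\otimes\mathfrak{m}_i}=b_iQ|_{\mathfrak{m}_i\otimes\mathfrak{m}_i}$, $\mathcal{B}_{\mathfrak{g}}$ the Killing form. $[ijk]=\sum Q([e_\alpha,e_\beta],e_\gamma)^2$ over a $Q$-orthonormal adapted basis, $e_\alpha\in\mathfrak{m}_i$, $e_\beta\in\mathfrak{m}_j$, $e_\gamma\in\mathfrak{m}_k$. Normalizer-adapted: if $p\le\ell_0$ and $[\mathfrak{m}_p,\mathfrak{m}_i]\neq0$,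 then $[\mathfrak{m}_p,\mathfrak{m}_i]\cap\mathfrak{m}_j\neq0$ for some $j$. For such $\varphi$, let $I^0_p=\{i:\mathrm{ad}(V_p)|_{\mathfrak{m}_i}=0\}$, $I^+_p$ its complement; for $i\in I^+_p$ there is exactly one $j$ with $[pij]>0$, and $\phi_p(i)$ is defined as this $j$; $\phi_p(i)=i$ for $i\in I^0_p$. *)

(* The Lie algebra g of G is modelled as R^n ('rV[R]_n) with
   a Q-orthonormal coordinate system, so Q is the standard dot product. *)
From HB Require Import structures.
From mathcomp Require Import all_boot all_order all_algebra.
From mathcomp Require Export reals.
Set Implicit Arguments. Unset Strict Implicit. Unset Printing Implicit Defensive.
Import Order.TTheory GRing.Theory Num.Theory.
Local Open Scope ring_scope.

Section LieDefs.
Variables (R : realType) (n : nat).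
Notation vec := 'rV[R]_n.
Notation bracket := (vec -> vec -> vec).

Definition Qf (x y : vec) : R := (x *m y^T) 0 0.

Definition lie_bracket (br : bracket) : Prop :=
  [/\ forall (a : R) x y z, br (a *: x + y) z = a *: br x z + br y z,
      forall x y, br x y = - br y x &
      forall x y z, br x (br y z) + br y (br z x) + br z (br x y) = 0].

(* ad-invariance of Q (equivalent to Ad(G)-invariance, G connected). *)
Definition Q_invariant (br : bracket) : Prop :=
  forall x y z, Qf (br x y) z = - Qf y (br x z).

(* matrix of ad x in row-vector convention: v *m ad_mx br x = br x v *)
Definition ad_mx (br : bracket) (x : vec) : 'M[R]_n :=
  \matrix_(i, j) (br x (delta_mx 0 i)) 0 j.

Definition killing (br : bracket) (x y : vec) : R :=
  \tr (ad_mx br x *m ad_mx br y).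

(* subspaces of g are row spaces of n x n matrices *)
Definition subalgebra (br : bracket) (h : 'M[R]_n) : Prop :=
  forall x y, (x <= h)%MS -> (y <= h)%MS -> (br x y <= h)%MS.

Definition almost_effective (br : bracket) (h : 'M[R]_n) : Prop :=
  forall I : 'M[R]_n, (I <= h)%MS ->
    (forall x y, (y <= I)%MS -> (br x y <= I)%MS) -> I == 0.

(* U is an ad(h)-submodule (= Ad(H)-submodule, H connected) *)
Definition h_invariant (br : bracket) (h U : 'M[R]_n) : Prop :=
  forall x y, (x <= h)%MS -> (y <= U)%MS -> (br x y <= U)%MS.

Definition irreducible_hmod (br : bracket) (h U : 'M[R]_n) : Prop :=
  [/\ U != 0, h_invariant br h U &
      forall W : 'M[R]_n, (W <= U)%MS -> h_invariant br h W ->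
        W == 0 \/ (W == U)%MS].

Definition mperp (h : 'M[R]_n) : 'M[R]_n := kermx h^T.

Definition in_m0 (br : bracket) (h : 'M[R]_n) (x : vec) : Prop :=
  (x <= mperp h)%MS /\ forall y, (y <= h)%MS -> br y x = 0.

Definition bracket_space (br : bracket) (A B : 'M[R]_n) : 'M[R]_n :=
  (\sum_(r < n) \sum_(s < n) <<br (row r A) (row s B)>>)%MS.

(* [ijk] computed in an adapted Q-orthonormal basis e of m, where e a lies in m_(idx a) *)
Definition brkt3 (br : bracket) (ell N : nat) (e : 'I_N -> vec) (idx : 'I_N -> 'I_ell)
    (i j k : 'I_ell) : R :=
  \sum_(a | idx a == i) \sum_(b | idx b == j) \sum_(c | idx c == k)
     (Qf (br (e a) (e b)) (e c)) ^+ 2.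

(* normalizer-adapted (indices p are 0-based: p < ell0 stands for 1 <= p <= ell0) *)
Definition normalizer_adapted (br : bracket) (ell ell0 : nat) (m : 'I_ell -> 'M[R]_n) : Prop :=
  forall p i : 'I_ell, (p < ell0)%N ->
    bracket_space br (m p) (m i) != 0 ->
    exists j : 'I_ell, (bracket_space br (m p) (m i) :&: m j)%MS != 0.

(* phi_p(i): i if ad(V_p)|m_i = 0, otherwise the (unique) j with [pij] > 0 *)
Definition phi (br : bracket) (ell N : nat) (e : 'I_N -> vec) (idx : 'I_N -> 'I_ell)
    (m : 'I_ell -> 'M[R]_n) (V : 'I_ell -> vec) (p i : 'I_ell) : 'I_ell :=
  if (m i *m ad_mx br (V p) == 0) then i
  else odflt i [pick j | 0 < brkt3 br e idx p i j].

End LieDefs.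

(* The vector V_p spans m_p and centralizes h, so ad(V_p) commutes with the
   action of h: the image m_i ad(V_p) of an irreducible summand is zero or
   irreducible, and since it equals [m_p, m_i], normalizer-adaptedness makes it
   one of the summands m_j.  If [p i j] > 0 then Q([V_p, x], y) <> 0 for some
   x in m_i, y in m_j, which forces m_i ad(V_p) = m_j, and by skew-symmetry of
   ad(V_p) also m_j ad(V_p) = m_i; hence d_i = d_j.  Finally ad-invariance of
   the Killing form gives b_j Q([V_p, x], y) = b_i Q([V_p, x], y). *)

From HB Require Import structures.
From mathcomp Require Import all_boot all_order all_algebra.
From mathcomp Require Import reals.
Import Order.TTheory GRing.Theory Num.Theory.
Set Implicit Arguments. Unset Strict Implicit. Unset Printing Implicit Defensive.
Local Open Scope ring_scope.

Lemma eqmx_rank1 (F : fieldType) m n (v : 'rV[F]_n) (A : 'M[F]_(m, n)) :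
  (v <= A)%MS -> v != 0 -> \rank A = 1%N -> (v == A)%MS.
Proof. by move=> vA v_nz rA; rewrite -(mxrank_leqif_eq vA).2 rank_rV v_nz rA. Qed.

Lemma mxrank_mulmx_swap (F : fieldType) m1 m2 n (A : 'M[F]_(m1, n)) (B : 'M[F]_(m2, n))
    (M : 'M[F]_n) :
  (A *m M == B)%MS -> (B *m M == A)%MS -> \rank A = \rank B.
Proof.
move=> AB BA; apply/eqP; rewrite eqn_leq.
by rewrite -{1}(eqmx_rank BA) -{2}(eqmx_rank AB) !mxrankM_maxl.
Qed.

Section QuadraticForm.
Variables (R : realType) (n : nat).
Implicit Types x y : 'rV[R]_n.

Lemma Qf_sym x y : Qf x y = Qf y x.
Proof. by rewrite /Qf -[x *m y^T]trmxK trmx_mul trmxK mxE. Qed.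

Lemma Qf_scalel c x y : Qf (c *: x) y = c * Qf x y.
Proof. by rewrite /Qf -scalemxAl mxE. Qed.

Lemma Qf0l y : Qf 0 y = 0.
Proof. by rewrite /Qf mul0mx mxE. Qed.

Lemma Qf_orthogonal (A B : 'M[R]_n) x y :
  A *m B^T = 0 -> (x <= A)%MS -> (y <= B)%MS -> Qf x y = 0.
Proof.
move=> AB /submxP [D ->] /submxP [E ->].
by rewrite /Qf trmx_mul !mulmxA -(mulmxA D) AB mulmx0 mul0mx mxE.
Qed.

Lemma Qf_eq1_neq0 x : Qf x x = 1 -> x != 0.
Proof. by apply: contra_eqN => /eqP ->; rewrite Qf0l eq_sym oner_eq0. Qed.

End QuadraticForm.

Lemma brkt3_gt0P (R : realType) n (br : 'rV[R]_n -> 'rV[R]_n -> 'rV[R]_n)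
    ell N (e : 'I_N -> 'rV[R]_n) (idx : 'I_N -> 'I_ell) i j k :
  0 < brkt3 br e idx i j k ->
  exists a b c, [/\ idx a = i, idx b = j, idx c = k & Qf (br (e a) (e b)) (e c) != 0].
Proof.
move/lt0r_neq0/eqP/psumr_neq0P => /(_ _) [a _|a /andP [/eqP ia]].
  by do 2!apply: sumr_ge0 => ? _; exact: sqr_ge0.
move/lt0r_neq0/eqP/psumr_neq0P => /(_ _) [b _|b /andP [/eqP ib]].
  by apply: sumr_ge0 => ? _; exact: sqr_ge0.
move/lt0r_neq0/eqP/psumr_neq0P => /(_ _) [c _|c /andP [/eqP ic]].
  exact: sqr_ge0.
by rewrite lt0r sqrf_eq0 => /andP [Q_nz _]; exists a, b, c.
Qed.

Section LieBracket.
Variables (R : realType) (n : nat) (br : 'rV[R]_n -> 'rV[R]_n -> 'rV[R]_n).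
Hypothesis br_lie : lie_bracket br.

Lemma br_anti x y : br x y = - br y x.
Proof. by case: br_lie. Qed.

Lemma brDl x y z : br (x + y) z = br x z + br y z.
Proof. by case: br_lie => lin _ _; have := lin 1 x y z; rewrite !scale1r. Qed.

Lemma br0l z : br 0 z = 0.
Proof. by apply: (addIr (br 0 z)); rewrite -brDl !add0r. Qed.

Lemma brZl a x z : br (a *: x) z = a *: br x z.
Proof. by case: br_lie => lin _ _; have := lin a x 0 z; rewrite !addr0 br0l addr0. Qed.

Lemma brNr x z : br z (- x) = - br z x.
Proof. by rewrite [LHS]br_anti -[- x]scaleN1r brZl scaleN1r opprK br_anti. Qed.

Lemma br_suml (I : finType) (c : I -> R) (v : I -> 'rV_n) z :
  br (\sum_i c i *: v i) z = \sum_i c i *: br (v i) z.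
Proof.
apply: (big_ind2 (fun a b => br a z = b)) => [|u u' w w' <- <-|i _].
- exact: br0l.
- exact: brDl.
- exact: brZl.
Qed.

Lemma br_sumr (I : finType) (c : I -> R) (v : I -> 'rV_n) z :
  br z (\sum_i c i *: v i) = \sum_i c i *: br z (v i).
Proof.
rewrite br_anti br_suml -sumrN; apply: eq_bigr => i _.
by rewrite -scalerN -br_anti.
Qed.

Lemma ad_mxE x v : v *m ad_mx br x = br x v.
Proof.
apply/rowP => j; rewrite !mxE {2}(row_sum_delta v) br_sumr summxE.
by apply: eq_bigr => i _; rewrite !mxE.
Qed.

Lemma br_jacobi x y v : br (br x y) v = br x (br y v) - br y (br x v).
Proof.
case: br_lie => _ _ /(_ x y v) /eqP.
rewrite [br v x]br_anti brNr [br v (br x y)]br_anti addr_eq0 opprK.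
by move/eqP <-.
Qed.

Lemma ad_mx_br x y :
  ad_mx br (br x y) = ad_mx br y *m ad_mx br x - ad_mx br x *m ad_mx br y.
Proof.
by apply/row_matrixP => i; rewrite !rowE mulmxBr !mulmxA !ad_mxE br_jacobi.
Qed.

Lemma killing_br x y z : killing br (br x y) z = - killing br y (br x z).
Proof.
rewrite /killing !ad_mx_br mulmxBl mulmxBr !linearB /= opprB -!mulmxA.
by rewrite [\tr (ad_mx br x *m _)]mxtrace_mulC -mulmxA.
Qed.

Lemma ad_mx_equivariant (h : 'M[R]_n) v :
  (forall y, (y <= h)%MS -> br y v = 0) ->
  forall x y, (x <= h)%MS -> br x (y *m ad_mx br v) = br x y *m ad_mx br v.
Proof.
move=> v_central x y xh; rewrite !ad_mxE; apply/eqP.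
by rewrite -subr_eq0 -br_jacobi v_central // br0l.
Qed.

Lemma bracket_space_line (v : 'rV[R]_n) (A U : 'M[R]_n) :
  (v == A)%MS -> (bracket_space br A U == U *m ad_mx br v)%MS.
Proof.
move=> /eqmxP vA; apply/andP; split.
  apply/sumsmx_subP => r _; apply/sumsmx_subP => s _; rewrite genmxE.
  have /sub_rVP [c ->] : (row r A <= v)%MS by rewrite vA row_sub.
  by rewrite brZl -ad_mxE scalemx_sub // -row_mul row_sub.
apply/row_subP => s; rewrite row_mul ad_mxE.
have /submxP [D ->] : (v <= A)%MS by rewrite vA.
rewrite mulmx_sum_row br_suml summx_sub // => r _; rewrite scalemx_sub //.
by apply: (sumsmx_sup r) => //; apply: (sumsmx_sup s) => //; rewrite genmxE.
Qed.

End LieBracket.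

Section HModules.
Variables (R : realType) (n : nat) (br : 'rV[R]_n -> 'rV[R]_n -> 'rV[R]_n).
Variable h : 'M[R]_n.

Lemma h_invariant_cap U W :
  h_invariant br h U -> h_invariant br h W -> h_invariant br h (U :&: W)%MS.
Proof.
move=> Uinv Winv x y xh; rewrite !sub_capmx => /andP [yU yW].
by rewrite Uinv ?Winv.
Qed.

Variable A : 'M[R]_n.
Hypothesis A_equivariant :
  forall x y, (x <= h)%MS -> br x (y *m A) = br x y *m A.

Lemma h_invariant_mulmx U : h_invariant br h U -> h_invariant br h (U *m A).
Proof.
move=> Uinv x _ xh /submxP [D ->].
by rewrite mulmxA A_equivariant // submxMr // Uinv // submxMl.
Qed.

Lemma irreducible_hmod_mulmx U :
  irreducible_hmod br h U -> U *m A != 0 -> irreducible_hmod br h (U *m A).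
Proof.
case=> _ Uinv Umin UA_nz; split=> //; first exact: h_invariant_mulmx.
move=> W WUA Winv.
(* P = {u in U | u A in W} *)
pose P := (U :&: kermx (A *m cokermx W))%MS.
have Pinv : h_invariant br h P.
  move=> x y xh; rewrite !sub_capmx => /andP [yU /sub_kermxP yAW].
  rewrite Uinv //; apply/sub_kermxP; rewrite mulmxA -A_equivariant //.
  by apply/eqP; rewrite -submxE Winv // submxE -mulmxA yAW.
have [/eqP P0 | /andP [_ UP]] := Umin P (capmxSl _ _) Pinv.
  left; case/submxP: WUA => D W_DUA.
  have : (D *m U <= P)%MS.
    rewrite sub_capmx submxMl; apply/sub_kermxP.
    by rewrite mulmxA -(mulmxA D) -W_DUA; apply/eqP; rewrite -submxE.
  by rewrite P0 submx0 => /eqP DU0; rewrite W_DUA mulmxA DU0 mul0mx.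
right; rewrite /eqmx WUA submxE -mulmxA; apply/eqP/sub_kermxP.
exact: submx_trans UP (capmxSr _ _).
Qed.

End HModules.

Section InvariantForm.
Variables (R : realType) (n : nat) (br : 'rV[R]_n -> 'rV[R]_n -> 'rV[R]_n).
Hypotheses (br_lie : lie_bracket br) (Q_inv : Q_invariant br).

Lemma Qf_br_skew z x y : Qf (br z x) y = - Qf (br z y) x.
Proof. by rewrite Q_inv Qf_sym. Qed.

Lemma killing_scale_eq (U W : 'M[R]_n) (bU bW : R) z x y :
  (forall u u', (u <= U)%MS -> (u' <= U)%MS -> - killing br u u' = bU * Qf u u') ->
  (forall w w', (w <= W)%MS -> (w' <= W)%MS -> - killing br w w' = bW * Qf w w') ->
  (x <= U)%MS -> (y <= W)%MS -> (br z x <= W)%MS -> (br z y <= U)%MS ->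
  Qf (br z x) y != 0 -> bU = bW.
Proof.
move=> kU kW xU yW zxW zyU Q_nz; apply: (mulIf Q_nz).
have := kW _ _ zxW yW; rewrite (killing_br br_lie) opprK => <-.
by rewrite Q_inv mulrN -kU // opprK.
Qed.

Variables (h : 'M[R]_n) (ell ell0 : nat) (m : 'I_ell -> 'M[R]_n).
Variables (p : 'I_ell) (v : 'rV[R]_n).
Hypotheses (m_irr : forall i, irreducible_hmod br h (m i))
  (m_orth : forall i j, i != j -> m i *m (m j)^T = 0)
  (m_na : normalizer_adapted br ell0 m) (p_lt : (p < ell0)%N)
  (v_mp : (v == m p)%MS) (v_central : forall y, (y <= h)%MS -> br y v = 0).

Lemma ad_mx_image_summand k :
  m k *m ad_mx br v != 0 -> exists j, (m k *m ad_mx br v == m j)%MS.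
Proof.
move=> img_nz; pose img := m k *m ad_mx br v.
have [_ img_inv img_min] :=
  irreducible_hmod_mulmx (ad_mx_equivariant br_lie v_central) (m_irr k) img_nz.
have /eqmxP bs_img := bracket_space_line br_lie (m k) v_mp.
have [j bs_j] : exists j, (bracket_space br (m p) (m k) :&: m j)%MS != 0.
  by apply: m_na p_lt _; rewrite (eqmx_eq0 bs_img).
have [_ mj_inv mj_min] := m_irr j; exists j.
have [/eqP img_j0 | /andP [_ img_j]] :=
  img_min _ (capmxSl _ _) (h_invariant_cap img_inv mj_inv).
  by case/negP: bs_j; rewrite -submx0 -img_j0 capmxS // bs_img.
have img_le : (img <= m j)%MS := submx_trans img_j (capmxSr _ _).
have [/eqP img0 | //] := mj_min _ img_le img_inv.
by rewrite -/img img0 eqxx in img_nz.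
Qed.

Lemma ad_mx_pairing_summand i j x y :
  (x <= m i)%MS -> (y <= m j)%MS -> Qf (br v x) y != 0 ->
  (m i *m ad_mx br v == m j)%MS.
Proof.
move=> xi yj Q_nz.
have vx_img : (br v x <= m i *m ad_mx br v)%MS by rewrite -(ad_mxE br_lie) submxMr.
have [|k img_k] := ad_mx_image_summand (k := i).
  apply: contraNneq Q_nz => img0.
  by move: vx_img; rewrite img0 submx0 => /eqP ->; rewrite Qf0l.
case: (eqVneq k j) => [<- // | kj].
by case/negP: Q_nz; rewrite (Qf_orthogonal (m_orth kj)) // -(eqmxP img_k).
Qed.

End InvariantForm.

Theorem lemma5p3 (R : realType) (n : nat)
  (br : 'rV[R]_n -> 'rV[R]_n -> 'rV[R]_n) (h : 'M[R]_n)
  (ell ell0 : nat) (m : 'I_ell -> 'M[R]_n) (V : 'I_ell -> 'rV[R]_n)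
  (b : 'I_ell -> R) (N : nat) (e : 'I_N -> 'rV[R]_n) (idx : 'I_N -> 'I_ell) :
  (* g compact Lie algebra with ad-invariant inner product Q, h = Lie(H) *)
  lie_bracket br -> Q_invariant br -> subalgebra br h -> almost_effective br h ->
  (* ordered Q-orthogonal decomposition of m into irreducible modules *)
  (ell0 <= ell)%N ->
  (forall i, irreducible_hmod br h (m i)) ->
  (forall i j : 'I_ell, i != j -> m i *m (m j)^T = 0) ->
  (\sum_(i < ell) m i == mperp h)%MS ->
  (* m_0 = m_1 + ... + m_ell0, each of dimension 1 *)
  (forall p : 'I_ell, (p < ell0)%N -> \rank (m p) = 1%N) ->
  (forall x, in_m0 br h x <-> (x <= \sum_(p : 'I_ell | (p < ell0)%N) m p)%MS) ->
  (* V_p a Q-unit vector in m_p *)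
  (forall p : 'I_ell, (p < ell0)%N -> (V p <= m p)%MS /\ Qf (V p) (V p) = 1) ->
  (* b_i : -B|m_i = b_i Q|m_i *)
  (forall i, 0 <= b i /\ forall x y, (x <= m i)%MS -> (y <= m i)%MS ->
                   - killing br x y = b i * Qf x y) ->
  (* e : Q-orthonormal basis of m adapted to the decomposition *)
  (forall a c, Qf (e a) (e c) = (a == c)%:R) ->
  (forall a, (e a <= m (idx a))%MS) ->
  (forall i, #|[set a | idx a == i]| = \rank (m i)) ->
  normalizer_adapted br ell0 m ->
  forall p i : 'I_ell, (p < ell0)%N ->
    \rank (m i) = \rank (m (phi br e idx m V p i)) /\ b i = b (phi br e idx m V p i).
Proof.
move=> br_lie Q_inv _ _ _ m_irr m_orth _ m_rank m0E V_unit m_b _ e_in _ m_na p i p_lt.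
have [Vp VV] := V_unit p p_lt.
have V_mp : (V p == m p)%MS := eqmx_rank1 Vp (Qf_eq1_neq0 VV) (m_rank p p_lt).
have V_central : forall y, (y <= h)%MS -> br y (V p) = 0.
  by have [_] := (m0E (V p)).2 (sumsmx_sup p p_lt Vp).
have pairing := ad_mx_pairing_summand br_lie m_irr m_orth m_na p_lt V_mp V_central.
rewrite /phi; case: ifP => [_|_]; first by split.
case: pickP => [j /brkt3_gt0P [a [c [d [ia ic jd]]]] | _]; last by split.
have /sub_rVP [k ->] : (e a <= V p)%MS by rewrite (eqmxP V_mp) -ia e_in.
rewrite (brZl br_lie) Qf_scalel mulf_eq0 negb_or => /andP [_ Q_nz].
have ec : (e c <= m i)%MS by rewrite -ic e_in.
have ed : (e d <= m j)%MS by rewrite -jd e_in.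
have ij := pairing _ _ _ _ ec ed Q_nz.
have ji : (m j *m ad_mx br (V p) == m i)%MS.
  by apply: pairing ed ec _; rewrite -oppr_eq0 -(Qf_br_skew Q_inv).
split; first exact: mxrank_mulmx_swap ij ji.
apply: (killing_scale_eq br_lie Q_inv (m_b i).2 (m_b j).2 ec ed _ _ Q_nz).
  by rewrite -(ad_mxE br_lie) -(eqmxP ij) submxMr.
by rewrite -(ad_mxE br_lie) -(eqmxP ji) submxMr.
Qed.
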